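(* The critical cardinalities of $\mathrm{Split}(B_\Omega,B_\Lambda)$, $\mathrm{Split}(\Omega,\Lambda)$ and $\mathrm{Split}(C_\Omega,C_\Lambda)$ are all equal to $\mathfrak u$; that is, for each of these three properties, $\mathfrak u$ is the minimal cardinality of a set of reals not satisfying it.
   Context: A set of reals is an infinite topological space homeomorphic to a subset of $\mathbb R$. A cover of a space $X$ is a family $\mathcal U$ of subsets of $X$ with $\bigcup\mathcal U=X$ such that $X\not\subseteq U$ for every $U\in\mathcal U$. A cover is a large cover if every $x\in X$ lies in infinitely many members; an $\omega$-cover if every finite subset of $X$ is contained in some member. $\Lambda,\Omega$ denote the collections of open large covers and open $\omega$-covers of $X$; $B_\Lambda,B_\Omega$ the collections of countable such covers by Borel sets; $C_\Lambda,C_\Omega$ the collections of countable such covers by clopen sets. $X$ satisfies $\mathrm{Split}(\mathfrak U,\mathfrak V)$ if every $\mathcal U\in\mathfrak U$ can be partitioned into two disjoint subfamilies each containing a subfamily belonging to $\mathfrak V$. $\mathfrak u$ is the minimal cardinality of a family $B$ of infinite subsets of $\mathbb N$ which is a base for a nonprincipal ultrafilter $U$ on $\mathbb N$, i.e. $U=\{a\subseteq\mathbb N: \exists b\in B\ (b\setminus a \text{ finite})\}$. *)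

From HB Require Import structures.
From mathcomp Require Import all_boot all_order all_algebra.
From mathcomp Require Import all_classical all_reals all_analysis.
Set Implicit Arguments. Unset Strict Implicit. Unset Printing Implicit Defensive.
Import Order.TTheory GRing.Theory Num.Theory.
Import numFieldNormedType.Exports.
Local Open Scope classical_set_scope.
Local Open Scope card_scope.

Section Defs.
Variable R : realType.

Definition rel_open (X U : set R) : Prop :=
  exists V : set R, open V /\ U = X `&` V.
Definition rel_borel (X U : set R) : Prop :=
  exists B : set R, <<s [set: R], @open R >> B /\ U = X `&` B.
Definition rel_clopen (X U : set R) : Prop :=
  rel_open X U /\ rel_open X (X `\` U).

Definition is_cover (X : set R) (C : set (set R)) : Prop :=
  (forall U, C U -> U `<=` X) /\
  \bigcup_(U in C) U = X /\
  (forall U, C U -> ~ (X `<=` U)).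
Definition large_cover (X : set R) (C : set (set R)) : Prop :=
  is_cover X C /\ forall x, X x -> infinite_set [set U | C U /\ U x].
Definition omega_cover (X : set R) (C : set (set R)) : Prop :=
  is_cover X C /\
  forall F : set R, finite_set F -> F `<=` X -> exists2 U, C U & F `<=` U.

Definition covLambda (X : set R) (C : set (set R)) : Prop :=
  large_cover X C /\ (forall U, C U -> rel_open X U).
Definition covOmega (X : set R) (C : set (set R)) : Prop :=
  omega_cover X C /\ (forall U, C U -> rel_open X U).
Definition covB_Lambda (X : set R) (C : set (set R)) : Prop :=
  large_cover X C /\ countable C /\ (forall U, C U -> rel_borel X U).
Definition covB_Omega (X : set R) (C : set (set R)) : Prop :=
  omega_cover X C /\ countable C /\ (forall U, C U -> rel_borel X U).
Definition covC_Lambda (X : set R) (C : set (set R)) : Prop :=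
  large_cover X C /\ countable C /\ (forall U, C U -> rel_clopen X U).
Definition covC_Omega (X : set R) (C : set (set R)) : Prop :=
  omega_cover X C /\ countable C /\ (forall U, C U -> rel_clopen X U).

Definition SplitP (KU KV : set R -> set (set R) -> Prop) (X : set R) : Prop :=
  forall C, KU X C ->
  exists C1 C2 : set (set R),
    C1 `|` C2 = C /\ C1 `&` C2 = set0 /\
    (exists2 D1, D1 `<=` C1 & KV X D1) /\
    (exists2 D2, D2 `<=` C2 & KV X D2).

End Defs.

Definition nonprincipal_ultrafilter (U : set (set nat)) : Prop :=
  U setT /\ ~ U set0 /\
  (forall a b, U a -> U b -> U (a `&` b)) /\
  (forall a b, U a -> a `<=` b -> U b) /\
  (forall a, U a \/ U (~` a)) /\
  (forall n, ~ U [set n]).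

Definition generated_by_base (B : set (set nat)) : set (set nat) :=
  [set a | exists2 b, B b & finite_set (b `\` a)].

Definition is_u_base (B : set (set nat)) : Prop :=
  (forall b, B b -> infinite_set b) /\
  nonprincipal_ultrafilter (generated_by_base B).

(* "u is the minimal cardinality of a set of reals not satisfying P":
   (1) every set of reals of cardinality < u satisfies P, i.e. every X strictly
       smaller than every base of a nonprincipal ultrafilter;
   (2) some set of reals of cardinality exactly u (equinumerous with a base of
       minimal cardinality) fails P. *)
Definition critical_card_is_u (R : realType) (P : set R -> Prop) : Prop :=
  (forall X : set R, infinite_set X ->
     (forall B, is_u_base B -> (X #<= B) /\ ~ (B #<= X)) -> P X) /\
  (exists X : set R, infinite_set X /\ ~ P X /\
     exists B0, is_u_base B0 /\ (forall B, is_u_base B -> B0 #<= B) /\ (X #= B0)).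

From HB Require Import structures.
From mathcomp Require Import all_boot all_order all_algebra.
From mathcomp Require Import all_classical all_reals all_analysis.
From mathcomp Require Import lra.
Set Implicit Arguments. Unset Strict Implicit. Unset Printing Implicit Defensive.
Import Order.TTheory GRing.Theory Num.Theory.
Import numFieldNormedType.Exports.
Local Open Scope classical_set_scope.
Local Open Scope card_scope.

(* If X is smaller than every u-base, a countable omega-cover C of X splits
   into two large covers: otherwise every set a of members of C is decided by
   some point x, in the sense that almost all members containing x lie in a, or
   almost all lie outside a; coding C into nat, the traces
   {U in C | x in U} then form a u-base of size at most |X|.  Open omega-covers
   reduce to countable ones because R is second countable.  Conversely, embed a
   u-base B of minimal size into the Cantor set: the clopen traces
   {b in B | n in b} form an omega-cover, and for any partition of it the
   ultrafilter picks a side, leaving a point coded by B in only finitely many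
   members of the other side. *)

Lemma infinite_set_image_inj (T U : Type) (f : T -> U) (A : set T) :
  {in A &, injective f} -> infinite_set A -> infinite_set (f @` A).
Proof. by move=> /inj_card_eq fA; rewrite (eq_finite_set fA). Qed.

Lemma finite_set_nat_bounded (A : set nat) :
  finite_set A -> exists N, forall n, A n -> (n < N)%N.
Proof.
move=> /finite_fsetP[S ->]; exists (\max_(i <- finmap.enum_fset S) i).+1 => n /= nS.
by rewrite ltnS; exact: leq_bigmax_seq nS _.
Qed.

Lemma infinite_set_nat_split (A : set nat) : infinite_set A ->
  exists2 A1, A1 `<=` A & infinite_set A1 /\ infinite_set (A `\` A1).
Proof.
move=> /infiniteP/pcard_leP/injfunPex[g gA ginj].
have ginjT (h : nat -> nat) : injective h -> infinite_set [set g (h n) | n in setT].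
  move=> hinj; apply: infinite_set_image_inj infinite_nat => m n _ _ /ginj.
  by rewrite !inE => /(_ I I)/hinj.
exists [set g n.*2 | n in setT]; first by move=> _ [n _ <-]; exact: gA.
split; first exact/ginjT/double_inj.
have double_succ_inj : injective (fun n => n.*2.+1) by move=> m n /succn_inj/double_inj.
apply: sub_infinite_set (ginjT _ double_succ_inj).
move=> _ [n _ <-]; split; first exact: gA.
move=> [m _ /ginj]; rewrite !inE => /(_ I I)/(congr1 odd).
by rewrite /= !odd_double.
Qed.

Section MinimalCardinality.
Variables (T : Type) (P : set (set T)).

Definition selector_family (S : set (set T -> T)) :=
  (forall s, S s -> forall A, P A -> A (s A)) /\
  (forall s t, S s -> S t -> s <> t -> forall A, P A -> s A <> t A).

(* By maximality: if no member were exhausted, a point of each member missed by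
   all selectors would define one more selector. *)
Lemma exists_exhausted_member A1 : P A1 -> ~ P set0 ->
  exists S, selector_family S /\
    exists2 A0, P A0 & forall a, A0 a -> exists2 s, S s & s A0 = a.
Proof.
move=> PA1 nP0.
have [t0 _] : A1 !=set0 by apply/set0P/eqP => A10; apply: nP0; rewrite -A10.
have [S [[Ssel Sdis] Smax]] : exists S, selector_family S /\
    forall S', S `<` S' -> ~ selector_family S'.
  apply: Zorn_bigcup => F FS Ftot; split.
    by move=> s [S FS' Ss]; exact: (FS S FS').1.
  move=> s t [S1 FS1 sS1] [S2 FS2 tS2].
  have [S12|S21] := Ftot _ _ FS1 FS2.
    by apply: (FS S2 FS2).2 => //; exact: S12.
  by apply: (FS S1 FS1).2 => //; exact: S21.
exists S; split => //; apply: contrapT => nexh.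
have /choice[g gP] : forall A, exists a, P A -> A a /\ forall s, S s -> s A <> a.
  move=> A; have [PA|nPA] := pselect (P A); last by exists t0.
  have /existsNP[a /not_implyP[Aa nSa]] :
      ~ (forall a, A a -> exists2 s, S s & s A = a) by move=> h; apply: nexh; exists A.
  by exists a => _; split => // s Ss sa; apply: nSa; exists s.
have nSg : ~ S g by move=> Sg; exact: (gP A1 PA1).2 g Sg erefl.
apply: (Smax (S `|` [set g])).
  by split => [s Ss|h]; [left|apply: nSg; apply: h; right].
split; first by move=> s [/Ssel //|->] A PA; exact: (gP A PA).1.
move=> s t [Ss|->] [St|->] st A PA.
- exact: Sdis.
- exact: (gP A PA).2 s Ss.
- by move=> e; apply: ((gP A PA).2 t St); rewrite e.
- by case: st.
Qed.

(* The selectors hitting the points of an exhausted member A0, evaluated at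
   any other member A, inject A0 into A. *)
Lemma exists_card_minimal : (exists A, P A) ->
  exists A0, P A0 /\ forall A, P A -> A0 #<= A.
Proof.
move=> [A1 PA1]; have [P0|nP0] := pselect (P set0).
  by exists set0; split => // A _; exact: card_ge0.
have [S [[Ssel Sdis] [A0 PA0 A0S]]] := exists_exhausted_member PA1 nP0.
exists A0; split => // A PA.
have /choice[h hP] : forall a, exists s, A0 a -> S s /\ s A0 = a.
  move=> a; have [A0a|nA0a] := pselect (A0 a); last by exists (fun=> a).
  by have [s Ss sa] := A0S a A0a; exists s.
have [f] : $|{injfun A0 >-> A}|.
  apply/injfunPex; exists (fun a => h a A).
    by move=> a A0a; exact: (Ssel _ (hP a A0a).1 _ PA).
  move=> a b /set_mem A0a /set_mem A0b hab.
  have [Sa <-] := hP a A0a; have [Sb <-] := hP b A0b.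
  by have -> : h a = h b by apply: contrapT => ne; exact: Sdis Sa Sb ne A PA hab.
exact: inj_card_le f.
Qed.

End MinimalCardinality.

Lemma exists_u_base : exists B, is_u_base B.
Proof.
have [G [UG FG]] := ultraFilterLemma (@eventually_filter).
have finG A : finite_set A -> ~ G A.
  move=> /finite_set_nat_bounded[N AN] GA.
  have GC : G [set n | (N <= n)%N] by apply: FG; exists N.
  apply: (@filter_not_empty _ G _); apply: filterS (filterI GA GC) => n [An Nn].
  by have := AN n An; rewrite ltnNge Nn.
exists G; split; first by move=> b Gb fb; exact: finG fb Gb.
have -> : generated_by_base G = G.
  apply/seteqP; split=> a; last by exists a => //; rewrite setDv.
  move=> [b Gb fba].
  have Gc : G (~` (b `\` a)) by case: (in_ultra_setVsetC (b `\` a) UG) => // /finG.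
  apply: filterS (filterI Gb Gc) => n [bn nbna]; apply: contrapT => na.
  by apply: nbna; split.
split; first exact: filterT.
split; first exact: filter_not_empty.
split; first by move=> a b; exact: filterI.
split; first by move=> a b Ga ab; exact: filterS ab Ga.
split; first by move=> a; exact: in_ultra_setVsetC.
by move=> n; apply: finG; exact: finite_set1.
Qed.

(* Triple intersections are what closure of the generated filter under
   intersection needs: a1 `&` a2 is tested against a third base element. *)
Lemma u_base_of_dichotomy (B : set (set nat)) : B !=set0 ->
  (forall b1 b2 b3, B b1 -> B b2 -> B b3 -> infinite_set (b1 `&` b2 `&` b3)) ->
  (forall a, (exists2 b, B b & finite_set (b `&` a)) \/
             (exists2 b, B b & finite_set (b `\` a))) ->
  is_u_base B.
Proof.
move=> [b0 Bb0] Binf3 dich.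
have Binf b : B b -> infinite_set b.
  by move=> Bb; have := Binf3 _ _ _ Bb Bb Bb; rewrite !setIid.
split => //; split; first by exists b0; rewrite ?setDT.
split; first by move=> [b Bb]; rewrite setD0; exact: Binf.
split.
  move=> a1 a2 [b1 Bb1 f1] [b2 Bb2 f2].
  have [[b3 Bb3 f3]|//] := dich (a1 `&` a2).
  exfalso; apply: (Binf3 _ _ _ Bb1 Bb2 Bb3).
  apply: sub_finite_set (_ : _ `<=` (b1 `\` a1) `|` (b2 `\` a2) `|` (b3 `&` (a1 `&` a2))) _.
    move=> n [[b1n b2n] b3n].
    have [a1n|] := pselect (a1 n); last by left; left.
    by have [a2n|] := pselect (a2 n); [right|left; right].
  by rewrite !finite_setU.
split.
  move=> a1 a2 [b Bb fb] a12; exists b => //; apply: sub_finite_set fb.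
  by move=> n [bn na2]; split => // /a12.
split.
  move=> a; have [[b Bb fb]|[b Bb fb]] := dich a; [right|left]; exists b => //.
  by rewrite setDE setCK.
by move=> n [b Bb]; exact: infinite_setD (Binf b Bb) (finite_set1 n).
Qed.

Lemma sub_generated_by_base (B : set (set nat)) : B `<=` generated_by_base B.
Proof. by move=> b Bb; exists b; rewrite ?setDv. Qed.

Section UBase.
Variable B : set (set nat).
Hypothesis uB : is_u_base B.
Local Notation G := (generated_by_base B).
Let GT : G setT := uB.2.1.
Let G0 : ~ G set0 := uB.2.2.1.
Let GI : forall a b, G a -> G b -> G (a `&` b) := uB.2.2.2.1.
Let GS : forall a b, G a -> a `<=` b -> G b := uB.2.2.2.2.1.

Lemma generated_by_u_base_ultra a : G a \/ G (~` a).
Proof. exact: uB.2.2.2.2.2.1. Qed.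

Lemma generated_by_u_base_meet a b : G a -> G b -> a `&` b !=set0.
Proof. by move=> Ga Gb; apply/set0P/eqP => ab0; apply: G0; rewrite -ab0; exact: GI. Qed.

Lemma generated_by_u_base_infinite a : G a -> infinite_set a.
Proof.
by move=> [b Bb fba] fa; exact: infinite_setD (uB.1 _ Bb) fa fba.
Qed.

Lemma generated_by_base_bigcap (F : set (set nat)) :
  finite_set F -> F `<=` G -> G [set n | forall b, F b -> b n].
Proof.
move=> /finite_seqP[s ->] {F}; elim: s => [|c s IH] sG.
  by apply: GS GT _ => n _ b /=; rewrite in_nil.
have Gc : G c by apply: sG; rewrite /= mem_head.
have Gs : G [set n | forall b, [set` s] b -> b n].
  by apply: IH => b bs; apply: sG; rewrite /= in_cons bs orbT.
apply: GS (GI Gc Gs) _ => n [cn sn] b /=; rewrite in_cons => /orP[/eqP->//|bs].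
exact: sn.
Qed.

(* A member of G contained in every b must be split by G into two infinite
   halves; the half outside G would be almost contained in some b's complement. *)
Lemma u_base_bigcap_notin : ~ G [set n | forall b, B b -> b n].
Proof.
set K := [set n | _] => GK.
have [A1 A1K [iA1 iKA1]] := infinite_set_nat_split (generated_by_u_base_infinite GK).
have [[b Bb fb]|[b Bb fb]] := generated_by_u_base_ultra A1.
  apply: iKA1; apply: sub_finite_set fb => n [Kn nA1n]; split; first exact: Kn.
  by move=> ?; apply: nA1n.
apply: iA1; apply: sub_finite_set fb => n A1n; split; first exact: A1K.
by move=> /(_ A1n).
Qed.

Lemma u_base_setC_bigcap : G (~` [set n | forall b, B b -> b n]).
Proof.
by case: (generated_by_u_base_ultra [set n | forall b, B b -> b n]) => // /u_base_bigcap_notin.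
Qed.

Lemma u_base_infinite : infinite_set B.
Proof.
move=> fB; apply: u_base_bigcap_notin.
by apply: generated_by_base_bigcap fB _ => b /sub_generated_by_base.
Qed.

End UBase.

Section OmegaCovers.
Variable R : realType.
Implicit Types (X : set R) (C D : set (set R)).

Definition splits_into_large_covers X C :=
  exists C1 C2, C1 `|` C2 = C /\ C1 `&` C2 = set0 /\
    large_cover X C1 /\ large_cover X C2.

Lemma omega_cover_infinite X C F : omega_cover X C ->
  finite_set F -> F `<=` X -> infinite_set [set U | C U /\ F `<=` U].
Proof.
move=> [[_ [_ CnX]] oC] fF FX fS.
have /choice[g gP] : forall U, exists x, C U -> X x /\ ~ U x.
  move=> U; have [CU|nCU] := pselect (C U); last by exists 0%R.
  by have /existsNP[x /not_implyP[Xx nUx]] := CnX U CU; exists x.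
pose F' := F `|` g @` [set U | C U /\ F `<=` U].
have fF' : finite_set F' by rewrite finite_setU; split => //; exact: finite_image.
have F'X : F' `<=` X by move=> x [/FX//|[U [CU _] <-]]; exact: (gP U CU).1.
have [U CU F'U] := oC F' fF' F'X.
apply: (gP U CU).2; apply: (F'U); right; exists U => //.
by split => // x Fx; apply: F'U; left.
Qed.

Lemma large_cover_sub X C D : is_cover X C -> D `<=` C ->
  (forall x, X x -> infinite_set [set U | D U /\ U x]) -> large_cover X D.
Proof.
move=> [CX [UC CnX]] DC Dinf; split => //; split; first by move=> U /DC/CX.
split; last by move=> U /DC/CnX.
apply/seteqP; split=> [x [U /DC/CX UX /UX]//|x Xx].
by have [U [DU Ux]] := infinite_setN0 (Dinf x Xx); exists U.
Qed.

Lemma unsplittable_dichotomy X C : is_cover X C ->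
  ~ splits_into_large_covers X C -> forall a : set (set R),
    (exists2 x, X x & finite_set [set U | (C `&` a) U /\ U x]) \/
    (exists2 x, X x & finite_set [set U | (C `\` a) U /\ U x]).
Proof.
move=> cC nsplit a; apply: contrapT => /not_orP[h1 h2]; apply: nsplit.
exists (C `&` a), (C `\` a); split; first exact: setUIDK.
split; first by apply/seteqP; split => U // [[_ ?] [_ ?]].
by split; apply: large_cover_sub cC _ _ => [U []//|x Xx fin];
  [apply: h1|apply: h2]; exists x.
Qed.

Lemma countable_omega_cover_splits X C : omega_cover X C -> countable C ->
  infinite_set X -> (forall B, is_u_base B -> ~ (B #<= X)) ->
  splits_into_large_covers X C.
Proof.
move=> oC /countable_injP[e einj] iX small; apply: contrapT => nsplit.
have dich := unsplittable_dichotomy oC.1 nsplit.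
pose T x := e @` [set U | C U /\ U x].
apply: (small (T @` X)); last exact: card_image_le.
apply: u_base_of_dichotomy.
- by have [x Xx] := infinite_setN0 iX; exists (T x), x.
- move=> _ _ _ [x Xx <-] [y Xy <-] [z Xz <-].
  have xyzX : [set x; y; z] `<=` X by move=> w [[->|->]|->].
  apply: sub_infinite_set (infinite_set_image_inj _
    (omega_cover_infinite oC (finite_set3 x y z) xyzX)).
    by move=> _ [U [CU xyzU] <-]; do 2?split; exists U => //; split => //;
      apply: xyzU; [left; left|left; right|right].
  by apply: sub_in2 einj => U; rewrite !inE => -[].
- move=> a; case: (dich (e @^-1` a)) => -[x Xx fin]; [left|right];
    exists (T x); (try by exists x); apply: sub_finite_set (finite_image e fin).
  + by move=> _ [[U [CU Ux] <-] aU]; exists U.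
  + by move=> _ [[U [CU Ux] <-] naU]; exists U.
Qed.

Lemma SplitP_countable_omega (Q : set R -> set R -> Prop) X :
  infinite_set X -> (forall B, is_u_base B -> ~ (B #<= X)) ->
  SplitP (fun X C => omega_cover X C /\ countable C /\ forall U, C U -> Q X U)
         (fun X C => large_cover X C /\ countable C /\ forall U, C U -> Q X U) X.
Proof.
move=> iX small C [oC [cC QC]].
have [C1 [C2 [UC [IC [l1 l2]]]]] := countable_omega_cover_splits oC cC iX small.
have sub1 : C1 `<=` C by rewrite -UC => U ?; left.
have sub2 : C2 `<=` C by rewrite -UC => U ?; right.
exists C1, C2; do 2!split => //; split.
- exists C1 => //; do 2?split => //; last by move=> U /sub1/QC.
  exact: sub_countable (subset_card_le sub1) cC.
- exists C2 => //; do 2?split => //; last by move=> U /sub2/QC.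
  exact: sub_countable (subset_card_le sub2) cC.
Qed.

Lemma rel_open_borel X U : rel_open X U -> rel_borel X U.
Proof. by move=> [V [oV ->]]; exists V; split => //; exact: sub_sigma_algebra. Qed.

Lemma open_rat_itv (W : set R) x : open W -> W x ->
  exists p : rat * rat, (ratr p.1 < x < ratr p.2)%R /\
    forall y, (ratr p.1 < y < ratr p.2)%R -> W y.
Proof.
move=> oW Wx; have /nbhs_ballP[e /= e0 eW] : nbhs x W by exact: open_nbhs_nbhs.
have [q1] : exists q, ratr q \in `]x - e, x[%R by apply: rat_in_itvoo; rewrite ltrBlDr ltrDl.
rewrite in_itv /= => /andP[q1a q1b].
have [q2] : exists q, ratr q \in `]x, x + e[%R by apply: rat_in_itvoo; rewrite ltrDl.
rewrite in_itv /= => /andP[q2a q2b].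
exists (q1, q2); split; first by rewrite /= q1b q2a.
move=> y /andP[/= y1 y2]; apply: eW; rewrite ball_itv /= in_itv /=.
by rewrite (lt_trans q1a y1) (lt_trans y2 q2b).
Qed.

(* Lindelof for omega-covers: finite unions V s of rational intervals form a
   countable family, and one member of C above each X `&` V s suffices. *)
Lemma omega_cover_countable_sub X C : omega_cover X C ->
  (forall U, C U -> rel_open X U) ->
  exists2 C', C' `<=` C & countable C' /\ omega_cover X C'.
Proof.
move=> oC oU.
pose V (s : seq (rat * rat)) := [set y : R | exists2 p, p \in s & (ratr p.1 < y < ratr p.2)%R].
pose good s := exists2 U, C U & X `&` V s `<=` U.
have /choice[g gP] : forall s, exists U, good s -> C U /\ X `&` V s `<=` U.
  move=> s; have [[U CU sU]|ng] := pselect (good s); last by exists set0.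
  by exists U.
have C'C : g @` good `<=` C by move=> _ [s gs <-]; exact: (gP s gs).1.
exists (g @` good) => //; split.
  exact: card_le_trans (card_image_le _ _) (countableP _).
suff omg F : finite_set F -> F `<=` X -> exists2 U, (g @` good) U & F `<=` U.
  split => //; split; first by move=> U /C'C; exact: oC.1.1.
  split; last by move=> U /C'C; exact: oC.1.2.2.
  apply/seteqP; split=> [x [U /C'C CU Ux]|x Xx]; first exact: oC.1.1 CU _ Ux.
  have [|U C'U xU] := omg [set x] (finite_set1 x); first by move=> y ->.
  by exists U => //; exact: xU.
move=> fF FX; have [U CU FU] := oC.2 F fF FX.
have [W [oW UE]] := oU U CU.
have WF x : F x -> W x by move=> /FU; rewrite UE => -[].
have /choice[h hP] : forall x, exists p : rat * rat, F x ->
    (ratr p.1 < x < ratr p.2)%R /\ forall y, (ratr p.1 < y < ratr p.2)%R -> W y.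
  move=> x; have [Fx|nFx] := pselect (F x); last by exists (0, 0)%R.
  by have [p Hp] := open_rat_itv oW (WF x Fx); exists p.
pose s := [seq h x | x <- finmap.enum_fset (fset_set F)].
have gs : good s.
  exists U => // y [Xy [_ /mapP[x xF ->] xy]]; rewrite UE; split => //.
  by move: xF; rewrite in_fset_set // inE => Fx; exact: (hP x Fx).2.
exists (g s); first by exists s.
move=> x Fx; apply: (gP s gs).2; split; first exact: FX.
by exists (h x); [apply: map_f; rewrite in_fset_set // inE|exact: (hP x Fx).1].
Qed.

Lemma SplitP_omega_open X : infinite_set X -> (forall B, is_u_base B -> ~ (B #<= X)) ->
  SplitP (@covOmega R) (@covLambda R) X.
Proof.
move=> iX small C [oC oU].
have [C' C'C [cC' oC']] := omega_cover_countable_sub oC oU.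
have [C1 [C2 [UC [IC [l1 l2]]]]] := countable_omega_cover_splits oC' cC' iX small.
have sub1 : C1 `<=` C' by rewrite -UC => U ?; left.
have sub2 : C2 `<=` C' by rewrite -UC => U ?; right.
exists (C1 `|` (C `\` C')), C2; split; first by rewrite setUAC UC setDUK.
split.
  apply/seteqP; split => // U [[C1U|[_ nC'U]] C2U]; last exact/nC'U/sub2.
  by rewrite -IC.
split; first by exists C1 => [U ?|]; [left|split => // U /sub1/C'C/oU].
by exists C2 => //; split => // U /sub2/C'C/oU.
Qed.

End OmegaCovers.

Section CantorEmbedding.
Variable R : realType.
Local Open Scope ring_scope.

Let r : R := 3^-1.
Let r_ge0 : 0 <= r. Proof. by rewrite invr_ge0. Qed.
Let r_le1 : r <= 1. Proof. by rewrite invf_le1 // ler1n. Qed.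
Let rX_ge0 n : 0 <= r ^+ n. Proof. exact: exprn_ge0. Qed.
Let rS n : r ^+ n.+1 * 3 = r ^+ n.
Proof. by rewrite exprSr -mulrA mulVf ?mulr1. Qed.

Definition cantor_digit (b : set nat) k : R := if `[< b k >] then 2 * r ^+ k.+1 else 0.
Definition cantor_partial (b : set nat) N : R := \sum_(k < N) cantor_digit b k.

Definition cantor_embed (b : set nat) : R := limn (cantor_partial b).

Lemma cantor_digit_ge0 b k : 0 <= cantor_digit b k.
Proof. by rewrite /cantor_digit; case: asboolP => // _; have := rX_ge0 k.+1; lra. Qed.

Lemma cantor_digit_le b k : cantor_digit b k <= 2 * r ^+ k.+1.
Proof. by rewrite /cantor_digit; case: asboolP => // _; have := rX_ge0 k.+1; lra. Qed.

Lemma cantor_partialS b N : cantor_partial b N.+1 = cantor_partial b N + cantor_digit b N.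
Proof. by rewrite /cantor_partial big_ord_recr. Qed.

Lemma cantor_partial_le b N : cantor_partial b N <= 1 - r ^+ N.
Proof.
elim: N => [|N IH]; first by rewrite /cantor_partial big_ord0 expr0 subrr.
by rewrite cantor_partialS; have := cantor_digit_le b N; have := rS N; lra.
Qed.

Lemma cantor_partial_cvg b : cvgn (cantor_partial b).
Proof.
apply: nondecreasing_is_cvgn.
  by apply/nondecreasing_seqP => n; rewrite cantor_partialS; have := cantor_digit_ge0 b n; lra.
by exists 1 => _ [N _ <-]; have := cantor_partial_le b N; have := rX_ge0 N; lra.
Qed.

(* Once b and c first differ at m, with m in c, the digit 2 r^(m+1) outweighs
   the whole tail of b, which is at most r^(m+1). *)
Lemma cantor_embed_first_diff b c m : (forall k, (k < m)%N -> (b k <-> c k)) ->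
  c m -> ~ b m -> r ^+ m.+1 <= cantor_embed c - cantor_embed b.
Proof.
move=> bc cm nbm.
have tail j : r ^+ m.+1 + r ^+ (m.+1 + j) <=
    cantor_partial c (m.+1 + j) - cantor_partial b (m.+1 + j).
  elim: j => [|j IH].
    rewrite addn0 !cantor_partialS.
    have -> : cantor_partial b m = cantor_partial c m.
      by apply: eq_bigr => i _; rewrite /cantor_digit (propext (bc i _)).
    by rewrite /cantor_digit (asboolT cm) (asboolF nbm); lra.
  rewrite addnS (cantor_partialS c) (cantor_partialS b).
  have := cantor_digit_ge0 c (m.+1 + j); have := cantor_digit_le b (m.+1 + j).
  have := rS (m.+1 + j); lra.
rewrite /cantor_embed -limB; [|exact: cantor_partial_cvg..].
apply: limr_ge; first by apply: is_cvgB; exact: cantor_partial_cvg.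
exists m.+1 => // N /= mN; rewrite -(subnKC mN) !fctE.
by have := tail (N - m.+1)%N; have := rX_ge0 (m.+1 + (N - m.+1)); lra.
Qed.

Lemma exists_first_diff (b c : set nat) n : c n -> ~ b n ->
  exists m, (m <= n)%N /\ (forall k, (k < m)%N -> (b k <-> c k)) /\
    ((c m /\ ~ b m) \/ (b m /\ ~ c m)).
Proof.
move=> cn nbn.
have exP : exists k, `[< b k >] != `[< c k >] by exists n; rewrite (asboolT cn) (asboolF nbn).
case: (ex_minnP exP) => m bcm minm; exists m; split.
  by apply: minm; rewrite (asboolT cn) (asboolF nbn).
split.
  move=> k km; have /negPn/eqP bck : ~~ (`[< b k >] != `[< c k >]).
    by apply/negP => /minm; rewrite leqNgt km.
  by split => ?; apply/asboolP; [rewrite -bck|rewrite bck]; apply/asboolP.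
by move: bcm; case: (asboolP (b m)); case: (asboolP (c m)) => // ? ? _; [right|left].
Qed.

Lemma cantor_embed_sep (b c : set nat) n : c n -> ~ b n ->
  r ^+ n.+1 <= `|cantor_embed c - cantor_embed b|.
Proof.
move=> cn nbn; have [m [mn [bc [[cm nbm]|[bm ncm]]]]] := exists_first_diff cn nbn.
  apply: le_trans (ler_norm _); apply: le_trans (cantor_embed_first_diff bc cm nbm).
  by apply: ler_wiXn2l.
rewrite distrC; apply: le_trans (ler_norm _).
have cb k : (k < m)%N -> (c k <-> b k) by move=> /bc [].
apply: le_trans (cantor_embed_first_diff cb bm ncm); by apply: ler_wiXn2l.
Qed.

Lemma cantor_embed_inj : injective cantor_embed.
Proof.
have neq b c n : c n -> ~ b n -> cantor_embed c <> cantor_embed b.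
  move=> cn nbn bc; have := cantor_embed_sep cn nbn.
  by rewrite bc subrr normr0 leNgt exprn_gt0 // invr_gt0.
move=> b c bc; apply/funext => n; apply/propext; split => [bn|cn]; apply: contrapT.
- by move=> ncn; exact: neq bn ncn bc.
- by move=> nbn; exact: neq cn nbn (esym bc).
Qed.

End CantorEmbedding.

Section CantorCounterexample.
Variables (R : realType) (B : set (set nat)).
Local Open Scope ring_scope.

Definition cantor_image : set R := cantor_embed R @` B.
Definition cantor_trace n : set R := cantor_embed R @` [set b | B b /\ b n].
Definition cantor_trace_cover : set (set R) :=
  cantor_trace @` ~` [set n | forall b, B b -> b n].

Lemma cantor_image_card : cantor_image #= B.
Proof. by apply: inj_card_eq => b c _ _ /cantor_embed_inj. Qed.

Lemma cantor_traceE b n : B b -> cantor_trace n (cantor_embed R b) <-> b n.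
Proof. by move=> Bb; split => [[c [Bc cn] /cantor_embed_inj <-]//|bn]; exists b. Qed.

Lemma cantor_trace_cover_countable : countable cantor_trace_cover.
Proof. exact: card_le_trans (card_image_le _ _) (countableP _). Qed.

(* Points of cantor_image coding b and c with n in b \ c are at distance at
   least 3^-(n+1), so the balls of that radius around cantor_trace n separate it. *)
Lemma cantor_trace_cover_clopen U : cantor_trace_cover U -> rel_clopen cantor_image U.
Proof.
move=> [n _ <-].
pose rn : R := (3^-1) ^+ n.+1.
have rn_gt0 : 0 < rn by rewrite exprn_gt0 // invr_gt0.
have ballE (P : set (set nat)) :
    cantor_image `&` \bigcup_(b in [set b | B b /\ P b]) ball (cantor_embed R b) rn =
    cantor_embed R @` [set c | B c /\ exists2 b, B b /\ P b &
      `|cantor_embed R b - cantor_embed R c| < rn].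
  apply/seteqP; split => [_ [[c Bc <-] [b Pb]]|_ [c [Bc [b Pb bc]] <-]].
    by rewrite ball_itv /= in_itv /= -ltr_distlC => bc; exists c => //; split => //; exists b.
  by split; [exists c|exists b => //; rewrite ball_itv /= in_itv /= -ltr_distlC].
have open_balls P : open (\bigcup_(b in [set b | B b /\ P b]) ball (cantor_embed R b) rn).
  by apply: bigcup_open => b _; exact: ball_open.
split; [exists (\bigcup_(b in [set b | B b /\ b n]) ball (cantor_embed R b) rn)
       |exists (\bigcup_(b in [set b | B b /\ ~ b n]) ball (cantor_embed R b) rn)];
  split => //; rewrite ballE; apply/seteqP; split.
- by move=> _ [c [Bc cn] <-]; exists c => //; split => //; exists c; rewrite ?subrr ?normr0.
- move=> _ [c [Bc [b [Bb bn] bc]] <-]; exists c => //; split => //.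
  apply: contrapT => ncn.
  by have := lt_le_trans bc (cantor_embed_sep R bn ncn); rewrite ltxx.
- move=> _ [[c Bc <-] /(cantor_traceE n Bc) ncn]; exists c => //; split => //.
  by exists c; rewrite ?subrr ?normr0.
- move=> _ [c [Bc [b [Bb nbn] bc]] <-]; split; first by exists c.
  move=> /(cantor_traceE n Bc) cn.
  by have := lt_le_trans bc (cantor_embed_sep R cn nbn); rewrite distrC ltxx.
Qed.

Hypothesis uB : is_u_base B.

Lemma cantor_image_infinite : infinite_set cantor_image.
Proof. by rewrite (eq_finite_set cantor_image_card); exact: u_base_infinite. Qed.

Lemma cantor_trace_cover_omega : omega_cover cantor_image cantor_trace_cover.
Proof.
have omg F : finite_set F -> F `<=` cantor_image ->
    exists2 U, cantor_trace_cover U & F `<=` U.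
  move=> fF FX; pose Fb := [set b | B b /\ F (cantor_embed R b)].
  have fFb : finite_set Fb.
    rewrite -(eq_finite_set (inj_card_eq (f := cantor_embed R) _)); last first.
      by move=> x y _ _ /cantor_embed_inj.
    by apply: sub_finite_set fF => _ [b [_ Fb'] <-].
  have GFb := generated_by_base_bigcap uB fFb (fun b bF => sub_generated_by_base bF.1).
  have [n [Fbn nKn]] := generated_by_u_base_meet uB GFb (u_base_setC_bigcap uB).
  exists (cantor_trace n); first by exists n.
  move=> x Fx; have [b Bb bx] := FX x Fx; rewrite -bx.
  by apply/cantor_traceE => //; apply: Fbn; split => //; rewrite bx.
split => //; split.
  by move=> _ [n _ <-] _ [b [Bb _] <-]; exists b.
split.
  apply/seteqP; split=> [x [_ [n _ <-] [b [Bb _] <-]]|x Xx]; first by exists b.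
  by have [|U CU xU] := omg [set x] (finite_set1 x); [move=> y ->|exists U => //; exact: xU].
move=> _ [n nKn <-] XU; apply: nKn => b Bb.
by apply/(cantor_traceE n Bb); apply: XU; exists b.
Qed.

Let finitely_covered_point D b : B b -> large_cover cantor_image D ->
  D `<=` cantor_trace_cover -> ~ finite_set [set n | b n /\ D (cantor_trace n)].
Proof.
move=> Bb lD Dcov fin; have Xb : cantor_image (cantor_embed R b) by exists b.
apply: (lD.2 _ Xb); apply: sub_finite_set (finite_image cantor_trace fin).
move=> U [DU Ub]; have [n _ Un] := Dcov U DU; rewrite -Un in DU Ub *.
by exists n => //; split => //; exact/(cantor_traceE n Bb).
Qed.

(* Whichever side of a partition the ultrafilter picks, a base element almost
   inside that side codes a point lying in only finitely many members of the
   other side. *)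
Lemma not_SplitP_cantor_image (KO KL : set R -> set (set R) -> Prop) :
  KO cantor_image cantor_trace_cover ->
  (forall D, KL cantor_image D -> large_cover cantor_image D) ->
  ~ SplitP KO KL cantor_image.
Proof.
move=> KOcov KLlarge /(_ _ KOcov)
  [C1 [C2 [UC [IC [[D1 D1C1 /KLlarge l1] [D2 D2C2 /KLlarge l2]]]]]].
have C1cov : C1 `<=` cantor_trace_cover by rewrite -UC => U ?; left.
have C2cov : C2 `<=` cantor_trace_cover by rewrite -UC => U ?; right.
have [[b Bb fb]|[b Bb fb]] := generated_by_u_base_ultra uB [set n | C1 (cantor_trace n)].
  apply: (finitely_covered_point Bb l2) => [U /D2C2/C2cov//|].
  apply: sub_finite_set fb => n [bn /D2C2 C2n]; split => // C1n.
  by have : (C1 `&` C2) (cantor_trace n) by []; rewrite IC.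
apply: (finitely_covered_point Bb l1) => [U /D1C1/C1cov//|].
by apply: sub_finite_set fb => n [bn /D1C1 C1n]; split => // /(_ C1n).
Qed.

End CantorCounterexample.

Lemma critical_card_is_uP (R : realType) (P : set R -> Prop) :
  (forall X, infinite_set X -> (forall B, is_u_base B -> ~ (B #<= X)) -> P X) ->
  (forall B, is_u_base B -> ~ P (cantor_image B)) ->
  critical_card_is_u P.
Proof.
move=> small_P nP; split; first by move=> X iX small; apply: small_P => // B /small[].
have [B0 [uB0 minB0]] := exists_card_minimal exists_u_base.
exists (cantor_image B0); split; first exact: cantor_image_infinite.
by split; [exact: nP|exists B0; split => //; split => //; exact: cantor_image_card].
Qed.

Theorem theorem5p3 (R : realType) :
  critical_card_is_u (SplitP (@covB_Omega R) (@covB_Lambda R)) /\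
  critical_card_is_u (SplitP (@covOmega R) (@covLambda R)) /\
  critical_card_is_u (SplitP (@covC_Omega R) (@covC_Lambda R)).
Proof.
split; [|split]; apply: critical_card_is_uP => [X|B uB].
- exact: SplitP_countable_omega.
- apply: (not_SplitP_cantor_image uB) => [|D []//].
  split; first exact: cantor_trace_cover_omega.
  split; first exact: cantor_trace_cover_countable.
  by move=> U /cantor_trace_cover_clopen[/rel_open_borel].
- exact: SplitP_omega_open.
- apply: (not_SplitP_cantor_image uB) => [|D []//].
  by split; [exact: cantor_trace_cover_omega|move=> U /cantor_trace_cover_clopen[]].
- exact: SplitP_countable_omega.
- apply: (not_SplitP_cantor_image uB) => [|D []//].
  split; first exact: cantor_trace_cover_omega.
  by split; [exact: cantor_trace_cover_countable|exact: cantor_trace_cover_clopen].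
Qed.
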